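(* Let $M$ be a Noetherian right $R$-module having the summand sum property. Then $M$ is principally Goldie*-lifting if and only if $M$ is Goldie*-lifting.
   Context: $R$ is an associative ring with identity; modules are unital right $R$-modules. $M$ has the summand sum property if the sum of any two direct summands of $M$ is a direct summand. $K\ll M$ means $K$ is small in $M$. For submodules $X,Y$ of $M$, $X\,\beta^*\,Y$ means $(X+Y)/X\ll M/X$ and $(X+Y)/Y\ll M/Y$. $M$ is Goldie*-lifting if for every submodule $X$ of $M$ there is a direct summand $D$ of $M$ with $X\,\beta^*\,D$; $M$ is principally Goldie*-lifting if this holds for every cyclic submodule $X$. *)

(* Right R-modules are modelled as left modules over the
   converse ring R^c, with the right action  m . r := r *: m. *)
From HB Require Import structures.
From mathcomp Require Import all_boot all_order all_algebra.
Set Implicit Arguments. Unset Strict Implicit. Unset Printing Implicit Defensive.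
Import GRing.Theory.
Local Open Scope ring_scope.

Section Modules.
Variables (R : pzRingType) (M : lmodType R^c).

(* Subsets of M are predicates (M need not be finite). *)
Definition subset_of (A B : M -> Prop) := forall m, A m -> B m.
Definition seteq (A B : M -> Prop) := forall m, A m <-> B m.
Definition fullset : M -> Prop := fun _ => True.
Definition zeroset : M -> Prop := fun m => m = 0.

Definition submodule (X : M -> Prop) : Prop :=
  X 0 /\ (forall x y, X x -> X y -> X (x + y)) /\
  (forall (r : R^c) x, X x -> X (r *: x)).

Definition sumset (X Y : M -> Prop) : M -> Prop :=
  fun m => exists x y, X x /\ Y y /\ m = x + y.
Definition capset (X Y : M -> Prop) : M -> Prop := fun m => X m /\ Y m.

Definition cyclic_sub (x : M) : M -> Prop := fun m => exists r : R^c, m = r *: x.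

Definition direct_summand (D : M -> Prop) : Prop :=
  submodule D /\ exists D', submodule D' /\
    seteq (sumset D D') fullset /\ seteq (capset D D') zeroset.

Definition small (K : M -> Prop) : Prop :=
  submodule K /\ forall L, submodule L -> seteq (sumset K L) fullset -> seteq L fullset.

(* For submodules X <= A of M:  A/X << M/X.  Via the correspondence between
   submodules of M/X and submodules L of M containing X (L/X), and since
   A/X + L/X = (A + L)/X, this reads: every submodule L >= X with
   A + L = M equals M. *)
Definition small_mod (X A : M -> Prop) : Prop :=
  forall L, submodule L -> subset_of X L ->
    seteq (sumset A L) fullset -> seteq L fullset.

Definition beta_star (X Y : M -> Prop) : Prop :=
  small_mod X (sumset X Y) /\ small_mod Y (sumset X Y).

Definition summand_sum_property : Prop :=
  forall D1 D2, direct_summand D1 -> direct_summand D2 -> direct_summand (sumset D1 D2).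

Definition noetherian : Prop :=
  forall f : nat -> M -> Prop, (forall n, submodule (f n)) ->
    (forall n, subset_of (f n) (f n.+1)) ->
    exists N, forall n, (N <= n)%N -> seteq (f n) (f N).

Definition goldie_star_lifting : Prop :=
  forall X, submodule X -> exists D, direct_summand D /\ beta_star X D.

Definition principally_goldie_star_lifting : Prop :=
  forall x : M, exists D, direct_summand D /\ beta_star (cyclic_sub x) D.
End Modules.

(* In a Noetherian module every submodule X is a finite sum x1 R + ... + xn R of
   cyclic submodules.  If xi R beta* Di with Di a direct summand, then
   X beta* D1 + ... + Dn, since beta* is compatible with sums, and
   D1 + ... + Dn is a direct summand by the summand sum property. *)
From Stdlib Require Import Classical ClassicalEpsilon.
From HB Require Import structures.
From mathcomp Require Import all_boot all_order all_algebra.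

Set Implicit Arguments. Unset Strict Implicit. Unset Printing Implicit Defensive.
Import GRing.Theory.
Local Open Scope ring_scope.

Section SubmoduleLattice.
Variables (R : pzRingType) (M : lmodType R^c).
Implicit Types X Y Z L A D : M -> Prop.

Lemma seteq_fullP A : seteq A (@fullset _ M) <-> forall m, A m.
Proof. by split=> H m; [apply/H | split]. Qed.

Lemma submodule_sumset X Y : submodule X -> submodule Y -> submodule (sumset X Y).
Proof.
move=> [X0 [XD XZ]] [Y0 [YD YZ]]; split; first by exists 0, 0; rewrite addr0.
split.
- move=> _ _ [a [b [Xa [Yb ->]]]] [c [d [Xc [Yd ->]]]].
  by exists (a + c), (b + d); rewrite addrACA; split; [exact: XD | split; [exact: YD |]].
- move=> r _ [a [b [Xa [Yb ->]]]]; exists (r *: a), (r *: b).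
  by rewrite scalerDr; split; [exact: XZ | split; [exact: YZ |]].
Qed.

Lemma submodule_cyclic (x : M) : submodule (cyclic_sub x).
Proof.
split; first by exists 0; rewrite scale0r.
split; first by move=> _ _ [r ->] [s ->]; exists (r + s); rewrite scalerDl.
by move=> r _ [s ->]; exists (r * s); rewrite scalerA.
Qed.

Lemma submodule_zeroset : submodule (@zeroset _ M).
Proof.
split=> //; split; first by move=> x y -> ->; rewrite addr0.
by move=> r x ->; rewrite scaler0.
Qed.

Lemma direct_summand_zeroset : direct_summand (@zeroset _ M).
Proof.
split; first exact: submodule_zeroset.
exists (@fullset _ M); split=> //; split=> m; last by split; [case | move=> ->].
by split=> // _; exists 0, m; rewrite add0r.
Qed.

Lemma cyclic_sub_self (x : M) : cyclic_sub x x.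
Proof. by exists 1; rewrite scale1r. Qed.

Lemma cyclic_sub_subset X x : submodule X -> X x -> subset_of (cyclic_sub x) X.
Proof. by move=> [_ [_ XZ]] Xx _ [r ->]; apply: XZ. Qed.

Lemma subset_sumsetl X Y : Y 0 -> subset_of X (sumset X Y).
Proof. by move=> Y0 x Xx; exists x, 0; rewrite addr0. Qed.

Lemma subset_sumsetr X Y : X 0 -> subset_of Y (sumset X Y).
Proof. by move=> X0 y Yy; exists 0, y; rewrite add0r. Qed.

Lemma sumset_subset X Y Z :
  submodule Z -> subset_of X Z -> subset_of Y Z -> subset_of (sumset X Y) Z.
Proof.
by move=> [_ [ZD _]] XZ YZ _ [x [y [Xx [Yy ->]]]]; apply: ZD; [apply: XZ | apply: YZ].
Qed.

Lemma sumsetC X Y : seteq (sumset X Y) (sumset Y X).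
Proof. by move=> m; split=> -[x [y [Xx [Yy ->]]]]; exists y, x; rewrite addrC. Qed.

Lemma sumsetA X Y Z : seteq (sumset (sumset X Y) Z) (sumset X (sumset Y Z)).
Proof.
move=> m; split.
- move=> [_ [z [[x [y [Xx [Yy ->]]]] [Zz ->]]]]; exists x, (y + z).
  by rewrite addrA; split=> //; split=> //; exists y, z.
- move=> [x [_ [Xx [[y [z [Yy [Zz ->]]]] ->]]]]; exists (x + y), z.
  by rewrite addrA; split=> //; exists x, y.
Qed.

Lemma sumset_seteq X X' Y Y' :
  seteq X X' -> seteq Y Y' -> seteq (sumset X Y) (sumset X' Y').
Proof.
move=> EX EY m; split=> -[x [y [Xx [Yy ->]]]]; exists x, y.
  by split; [apply/EX | split; [apply/EY |]].
by split; [apply/EX | split; [apply/EY |]].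
Qed.

Lemma sumset_absorbl X Y L : X 0 -> submodule L -> subset_of X L ->
  seteq (sumset (sumset X Y) L) (sumset Y L).
Proof.
move=> X0 [_ [LD _]] XL m; split.
- move=> [_ [l [[x [y [Xx [Yy ->]]]] [Ll ->]]]].
  exists y, (x + l); rewrite addrAC addrC; split=> //; split=> //.
  by apply: LD => //; apply: XL.
- move=> [y [l [Yy [Ll ->]]]]; exists (0 + y), l.
  by rewrite add0r; split=> //; exists 0, y; rewrite add0r.
Qed.

End SubmoduleLattice.

Section BetaStar.
Variables (R : pzRingType) (M : lmodType R^c).
Implicit Types X Y L A D : M -> Prop.

Lemma small_mod_seteq X X' A A' :
  seteq X X' -> seteq A A' -> small_mod X A -> small_mod X' A'.
Proof.
move=> EX EA hXA L sL X'L AL; apply: hXA => // [m /EX | m]; first exact: X'L.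
by rewrite -(AL m); apply: sumset_seteq.
Qed.

Lemma small_mod_sumsetl X Y : X 0 -> small_mod X (sumset X Y) <-> small_mod X Y.
Proof.
move=> X0; split=> h L sL XL EL; apply: h => // m; rewrite -EL;
  have := sumset_absorbl Y X0 sL XL m; tauto.
Qed.

Lemma beta_starE X Y : X 0 -> Y 0 ->
  beta_star X Y <-> small_mod X Y /\ small_mod Y X.
Proof.
move=> X0 Y0; rewrite /beta_star -(small_mod_sumsetl Y X0) -(small_mod_sumsetl X Y0).
by split=> -[hX hY]; split=> //; apply: small_mod_seteq hY => //; apply: sumsetC.
Qed.

(* Apply the hypothesis on X1 to the submodule Y2 + L, then the one on X2 to L. *)
Lemma small_mod_sumset X1 X2 Y1 Y2 : X1 0 -> X2 0 -> submodule Y2 ->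
  small_mod X1 Y1 -> small_mod X2 Y2 -> small_mod (sumset X1 X2) (sumset Y1 Y2).
Proof.
move=> X10 X20 sY2 h1 h2 L sL XL /seteq_fullP YL.
have X1L := fun x X1x => XL x (subset_sumsetl X20 X1x).
have X2L := fun x X2x => XL x (subset_sumsetr X10 X2x).
apply: h2 => //; apply: h1; first exact: submodule_sumset.
  by move=> x /X1L; apply: subset_sumsetr; case: sY2.
by apply/seteq_fullP=> m; apply/sumsetA.
Qed.

Lemma beta_star_sumset X1 X2 D1 D2 : submodule X1 -> submodule X2 ->
  submodule D1 -> submodule D2 ->
  beta_star X1 D1 -> beta_star X2 D2 -> beta_star (sumset X1 X2) (sumset D1 D2).
Proof.
move=> sX1 sX2 sD1 sD2.
move=> /(beta_starE sX1.1 sD1.1) [h1 h1'] /(beta_starE sX2.1 sD2.1) [h2 h2'].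
apply/(beta_starE (submodule_sumset sX1 sX2).1 (submodule_sumset sD1 sD2).1).
by split; apply: small_mod_sumset => //;
  [exact: sX1.1 | exact: sX2.1 | exact: sD1.1 | exact: sD2.1].
Qed.

Lemma beta_star_seteql X X' D : seteq X X' -> beta_star X D -> beta_star X' D.
Proof.
move=> EX [hX hD]; have EXD : seteq (sumset X D) (sumset X' D) by apply: sumset_seteq.
by split; [apply: small_mod_seteq hX | apply: small_mod_seteq hD].
Qed.

End BetaStar.

Section NoetherianExhaustion.
Variables (R : pzRingType) (M : lmodType R^c).
Implicit Types X Y : M -> Prop.

(* Otherwise adjoining, again and again, a cyclic submodule of X not yet
   covered yields a strictly ascending chain. *)
Lemma noetherian_cyclic_exhaustion (P : (M -> Prop) -> Prop) X :
  noetherian M -> submodule X -> P (@zeroset _ M) ->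
  (forall Y x, submodule Y -> subset_of Y X -> X x -> P Y ->
     P (sumset Y (cyclic_sub x))) ->
  exists2 Y, P Y & seteq Y X.
Proof.
move=> hN sX P0 PS; apply: NNPP => noY.
pose inv Y := [/\ submodule Y, subset_of Y X & P Y].
have escape Y : inv Y -> exists x, X x /\ ~ Y x.
  case=> _ YX PY; apply: NNPP => covered; apply: noY; exists Y => // m.
  split=> [/YX // | Xm]; apply: NNPP => nYm; apply: covered; by exists m.
pose next Y := epsilon (inhabits (0 : M)) (fun x => X x /\ ~ Y x).
have nextP Y : inv Y -> X (next Y) /\ ~ Y (next Y).
  by move=> /escape; apply: epsilon_spec.
pose f n := iter n (fun Y => sumset Y (cyclic_sub (next Y))) (@zeroset _ M).
have invf n : inv (f n).
  elim: n => [|n [sY YX PY]].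
    by split=> // [|m ->]; [exact: submodule_zeroset | case: sX].
  have [Xx _] := nextP _ (And3 sY YX PY).
  split; [exact: submodule_sumset (submodule_cyclic _) | | exact: PS].
  exact: sumset_subset (cyclic_sub_subset sX Xx).
have sf n : submodule (f n) by case: (invf n).
have incf n : subset_of (f n) (f n.+1).
  exact: subset_sumsetl (submodule_cyclic _).1.
have [N stable] := hN f sf incf.
have [_ nfN] := nextP _ (invf N).
apply: nfN; apply/(stable N.+1 (leqnSn N)).
exact: subset_sumsetr (sf N).1 _ (cyclic_sub_self _).
Qed.

End NoetherianExhaustion.

Section Lifting.
Variables (R : pzRingType) (M : lmodType R^c).
Implicit Types X Y D : M -> Prop.

Definition lifts_to_summand X := exists D, direct_summand D /\ beta_star X D.

Lemma beta_star_zeroset : beta_star (@zeroset _ M) (@zeroset _ M).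
Proof.
apply/(beta_starE (erefl 0) (erefl 0)); split=> L _ _ /seteq_fullP YL;
  by apply/seteq_fullP=> m; have [_ [l [-> [Ll ->]]]] := YL m; rewrite add0r.
Qed.

Lemma lifts_to_summand_zeroset : lifts_to_summand (@zeroset _ M).
Proof.
by exists (@zeroset _ M); split; [exact: direct_summand_zeroset | exact: beta_star_zeroset].
Qed.

Lemma lifts_to_summand_sumset X Y : summand_sum_property M ->
  submodule X -> submodule Y -> lifts_to_summand X -> lifts_to_summand Y ->
  lifts_to_summand (sumset X Y).
Proof.
move=> hSSP sX sY [D [dD bXD]] [E [dE bYE]]; exists (sumset D E).
by split; [exact: hSSP | exact: beta_star_sumset sX sY dD.1 dE.1 bXD bYE].
Qed.

Lemma lifts_to_summand_seteq X Y : seteq X Y -> lifts_to_summand X -> lifts_to_summand Y.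
Proof. by move=> EXY [D [dD bXD]]; exists D; split=> //; apply: beta_star_seteql bXD. Qed.

End Lifting.

Theorem proposition3p18 (R : pzRingType) (M : lmodType R^c)
  (hN : noetherian M) (hSSP : summand_sum_property M) :
  principally_goldie_star_lifting M <-> goldie_star_lifting M.
Proof.
split=> [hP X sX | hG x]; last exact: hG (submodule_cyclic x).
have [Y lY YX] : exists2 Y, lifts_to_summand Y & seteq Y X.
  apply: (noetherian_cyclic_exhaustion hN sX (lifts_to_summand_zeroset M)).
  move=> Y x sY _ _ lY.
  exact: lifts_to_summand_sumset hSSP sY (submodule_cyclic x) lY (hP x).
exact: lifts_to_summand_seteq YX lY.
Qed.
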